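(* Let $H_1,H_2$ be separable Hilbert spaces, $K\in B(H_1)$, $L\in B(H_2)$, and let $\{x_n\oplus y_n\}_{n\geqslant1}$ be a $K\oplus L$-frame for $H_1\oplus H_2$ (so that $\{x_n\}$ is a $K$-frame for $H_1$ and $\{y_n\}$ an $L$-frame for $H_2$). Then: (i) if $\{x_n\}_{n\geqslant1}$ is $K$-minimal, then $L=0$; (ii) if $\{y_n\}_{n\geqslant1}$ is $L$-minimal, then $K=0$; (iii) if $\{x_n\}_{n\geqslant1}$ is $K$-minimal and $\{y_n\}_{n\geqslant1}$ is $L$-minimal, then $K=0$ and $L=0$. In particular, if $K\neq0$ and $L\neq0$, and $\{x_n\}_{n\geqslant1}$ is a $K$-minimal $K$-frame or $\{y_n\}_{n\geqslant1}$ is an $L$-minimal $L$-frame, then $\{x_n\oplus y_n\}_{n\geqslant1}$ is not a $K\oplus L$-frame for $H_1\oplus H_2$.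
   Context: $H_1\oplus H_2$ is the Hilbert space of pairs $x\oplus y$ with inner product $\langle x\oplus y,a\oplus b\rangle=\langle x,a\rangle+\langle y,b\rangle$; $(K\oplus L)(x\oplus y)=K(x)\oplus L(y)$. For a Hilbert space $H$ and $K\in B(H)$, $\{z_n\}_{n\geqslant1}$ is a $K$-frame if there are $A,B>0$ with $A\|K^*z\|^2\leq\sum_n|\langle z,z_n\rangle|^2\leq B\|z\|^2$ for all $z\in H$. Its synthesis operator is $T:\ell^2\to H$, $T(\{a_n\})=\sum_na_nz_n$. A $K$-frame is called $K$-minimal if its synthesis operator is injective. *)

From HB Require Import structures.
From mathcomp Require Import all_boot all_order all_algebra.
From mathcomp Require Import all_classical all_reals all_analysis.
From mathcomp Require Import complex.

Set Implicit Arguments.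
Unset Strict Implicit.
Unset Printing Implicit Defensive.

Import Order.TTheory GRing.Theory Num.Theory.
Local Open Scope ring_scope.

Section Hilbert.
Variable R : realType.
Local Notation C := (R[i]).

Definition cabs2 (c : C) : R := complex.Re c ^+ 2 + complex.Im c ^+ 2.

Variable V : lmodType C.
Implicit Types (ip : V -> V -> C).

Definition inner_product ip : Prop :=
  [/\ (forall (a : C) (u v w : V), ip (a *: u + v) w = a * ip u w + ip v w),
      (forall u v : V, ip v u = conjc (ip u v)),
      (forall u : V, 0 <= complex.Re (ip u u)) &
      (forall u : V, ip u u = 0 -> u = 0)].

Definition hnorm ip (u : V) : R := Num.sqrt (complex.Re (ip u u)).

Definition hconv ip (u : nat -> V) (l : V) : Prop :=
  forall e : R, 0 < e -> exists N : nat, forall n : nat, (N <= n)%N ->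
    hnorm ip (u n - l) < e.

Definition hcauchy ip (u : nat -> V) : Prop :=
  forall e : R, 0 < e -> exists N : nat, forall n m : nat,
    (N <= n)%N -> (N <= m)%N -> hnorm ip (u n - u m) < e.

Definition hilbert_space ip : Prop :=
  inner_product ip /\
  (forall u : nat -> V, hcauchy ip u -> exists l : V, hconv ip u l).

Definition separable ip : Prop :=
  exists s : nat -> V, forall (v : V) (e : R), 0 < e ->
    exists n : nat, hnorm ip (v - s n) < e.

Definition bounded_op ip (K : V -> V) : Prop :=
  (forall (a : C) (u v : V), K (a *: u + v) = a *: K u + K v) /\
  (exists M : R, forall u : V, hnorm ip (K u) <= M * hnorm ip u).

Definition adjoint ip (K Ks : V -> V) : Prop :=
  forall u v : V, ip (K u) v = ip u (Ks v).

Definition Kframe ip (K : V -> V) (z : nat -> V) : Prop :=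
  exists Ks : V -> V, adjoint ip K Ks /\
  exists A B : R, 0 < A /\ 0 < B /\
    forall v : V,
      ((A * hnorm ip (Ks v) ^+ 2)%:E <= \sum_(0 <= n <oo) (cabs2 (ip v (z n)))%:E)%E /\
      (\sum_(0 <= n <oo) (cabs2 (ip v (z n)))%:E <= (B * hnorm ip v ^+ 2)%:E)%E.

Definition in_l2 (a : nat -> C) : Prop :=
  (\sum_(0 <= n <oo) (cabs2 (a n))%:E < +oo)%E.

(* synthesis operator: T(a) = sum_n a_n z_n, i.e. the partial sums
   converge to v in the norm of H *)
Definition synthesis ip (z : nat -> V) (a : nat -> C) (v : V) : Prop :=
  hconv ip (fun N => \sum_(i < N) a i *: z i) v.

(* K-minimal: the synthesis operator l^2 -> H is injective *)
Definition Kminimal ip (z : nat -> V) : Prop :=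
  forall (a b : nat -> C) (v : V), in_l2 a -> in_l2 b ->
    synthesis ip z a v -> synthesis ip z b v -> a = b.

End Hilbert.

Definition ip_sum (R : realType) (V1 V2 : lmodType R[i])
  (ip1 : V1 -> V1 -> R[i]) (ip2 : V2 -> V2 -> R[i]) (p q : V1 * V2) : R[i] :=
  ip1 p.1 q.1 + ip2 p.2 q.2.

Definition op_sum (V1 V2 : Type) (K : V1 -> V1) (L : V2 -> V2)
  (p : V1 * V2) : V1 * V2 := (K p.1, L p.2).

From HB Require Import structures.
From mathcomp Require Import all_boot all_order all_algebra.
From mathcomp Require Import all_classical all_reals all_analysis.
From mathcomp Require Import complex ring lra.
Import Order.TTheory GRing.Theory Num.Theory.
Local Open Scope ring_scope.

(* For (i), let {x_n} be K-minimal and suppose w = L q <> 0.  Testing the adjoint of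
   K (+) L against (0, q) shows that the second component of (K (+) L)^*(u, w) is
   nonzero and does not depend on u, so the lower frame bound keeps every sequence
   n |-> <u, x_n> + <w, y_n>, u in H1, at squared l^2-norm >= delta for some
   delta > 0.  These sequences form the coset b + T^* H1 in l^2, with T the
   synthesis operator of {x_n}; its point a of least norm is thus nonzero and
   orthogonal to T^* H1, i.e. T a = 0 = T 0, contradicting K-minimality.  Part (ii)
   is part (i) with the summands swapped.  The point of least norm is built from
   partial sums (a minimizing sequence is Cauchy by the parallelogram law). *)

Section nneseries_partial_sums.
Context {R : realType}.
Implicit Types (f : nat -> R) (M x e : R).

Lemma nneseries_esup f : (forall n, 0 <= f n) ->
  (\sum_(0 <= n <oo) (f n)%:E =
   ereal_sup (range (fun N => (\sum_(i < N) f i)%:E)))%E.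
Proof.
move=> f0; have f0E n : (0 <= n)%N -> true -> (0 <= (f n)%:E)%E.
  by rewrite lee_fin.
rewrite (cvg_lim _ (ereal_nondecreasing_cvgn (ereal_nondecreasing_series f0E))) //.
by congr ereal_sup; apply/seteqP; split => _ [N _ <-]; exists N;
  rewrite // big_mkord sumEFin.
Qed.

Lemma nneseries_le f M : (forall n, 0 <= f n) ->
  (forall N, \sum_(i < N) f i <= M) -> (\sum_(0 <= n <oo) (f n)%:E <= M%:E)%E.
Proof.
move=> f0 fM; rewrite nneseries_esup //.
by apply: ge_ereal_sup => _ [N _ <-]; rewrite lee_fin.
Qed.

Lemma partial_le_nneseries f N : (forall n, 0 <= f n) ->
  ((\sum_(i < N) f i)%:E <= \sum_(0 <= n <oo) (f n)%:E)%E.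
Proof. by move=> f0; rewrite nneseries_esup //; apply: ereal_sup_ubound; exists N. Qed.

Lemma lt_partial_nneseries f x e : (forall n, 0 <= f n) -> 0 < e ->
  (x%:E <= \sum_(0 <= n <oo) (f n)%:E)%E -> exists N, x - e < \sum_(i < N) f i.
Proof.
move=> f0 e0; rewrite nneseries_esup // => xf.
have : ((x - e)%:E < ereal_sup (range (fun N => (\sum_(i < N) f i)%:E)))%E.
  by apply: lt_le_trans xf; rewrite lte_fin ltrBlDr ltrDl.
by case/ereal_sup_gt => _ [N _ <-]; rewrite lte_fin; exists N.
Qed.

End nneseries_partial_sums.

Section complex_sqnorm.
Context {R : realType}.
Local Notation C := R[i].
Local Notation Re := complex.Re.
Local Notation Im := complex.Im.
Implicit Types (p q m : C) (t : R).

Lemma cabs2_ge0 p : 0 <= cabs2 p.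
Proof. by rewrite addr_ge0 // sqr_ge0. Qed.

Lemma cabs20 : cabs2 (0 : C) = 0.
Proof. by rewrite /cabs2 expr0n addr0. Qed.

Lemma cabs2N p : cabs2 (- p) = cabs2 p.
Proof. by case: p => a b; rewrite /cabs2; simpc; rewrite /= !sqrrN. Qed.

Lemma Re_sqr_le_cabs2 p : Re p ^+ 2 <= cabs2 p.
Proof. by rewrite lerDl sqr_ge0. Qed.

Lemma Im_sqr_le_cabs2 p : Im p ^+ 2 <= cabs2 p.
Proof. by rewrite lerDr sqr_ge0. Qed.

Lemma ReD p q : Re (p + q) = Re p + Re q.
Proof. by case: p q => [? ?] [? ?]. Qed.

Lemma ReN p : Re (- p) = - Re p.
Proof. by case: p. Qed.

Lemma ReB p q : Re (p - q) = Re p - Re q.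
Proof. by rewrite ReD ReN. Qed.

Lemma ImB p q : Im (p - q) = Im p - Im q.
Proof. by case: p q => [? ?] [? ?]. Qed.

Lemma Re_sum (I : Type) (r : seq I) (f : I -> C) :
  Re (\sum_(i <- r) f i) = \sum_(i <- r) Re (f i).
Proof. exact: (raddf_sum (@complex.Re R : Rcomplex R -> R)). Qed.

Lemma Im_eq0_conj p : p = p^*%C -> Im p = 0.
Proof.
by case: p => a b [] /eqP; rewrite -subr_eq0 opprK -mulr2n mulrn_eq0 => /eqP.
Qed.

Lemma Re_mulJ_le p q t : 0 < t ->
  2 * Re (p * q^*%C) <= t * cabs2 p + t^-1 * cabs2 q.
Proof.
move=> t0; case: p q => [a b] [c d]; rewrite /cabs2; simpc => /=.
have t'0 : 0 <= t^-1 by rewrite invr_ge0 ltW.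
have := mulr_ge0 t'0 (addr_ge0 (sqr_ge0 (t * a - c)) (sqr_ge0 (t * b - d))).
have -> : t^-1 * ((t * a - c) ^+ 2 + (t * b - d) ^+ 2) =
    t * (a ^+ 2 + b ^+ 2) + t^-1 * (c ^+ 2 + d ^+ 2) - 2 * (a * c + b * d).
  by field; rewrite gt_eqF.
lra.
Qed.

Lemma cabs2_addr_le p q t : 0 < t ->
  cabs2 (p + q) <= (1 + t) * cabs2 p + (1 + t^-1) * cabs2 q.
Proof.
move=> t0; have := Re_mulJ_le p q t t0.
have -> : cabs2 (p + q) = cabs2 p + cabs2 q + 2 * Re (p * q^*%C).
  by case: p q => [a b] [c d]; rewrite /cabs2; simpc => /=; ring.
lra.
Qed.

Lemma cabs2_subZ p q t :
  cabs2 (p - t%:C%C * q) = cabs2 p - 2 * t * Re (p * q^*%C) + t ^+ 2 * cabs2 q.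
Proof. by case: p q => [a b] [c d]; rewrite /cabs2; simpc => /=; ring. Qed.

Lemma cabs2_midpoint p q m : m + m = p + q ->
  cabs2 (p - q) = 2 * cabs2 p + 2 * cabs2 q - 4 * cabs2 m.
Proof.
case: p q m => [a b] [c d] [e f]; simpc => -[mr mi]; rewrite /cabs2 /=.
have -> : e = (a + c) / 2 by rewrite -mr; field.
have -> : f = (b + d) / 2 by rewrite -mi; field.
by field.
Qed.

End complex_sqnorm.

Section inner_product_theory.
Context {R : realType} {V : lmodType R[i]} {ip : V -> V -> R[i]}.
Hypothesis hip : inner_product ip.

Lemma ipJ u v : ip v u = (ip u v)^*%C.
Proof. by case: hip. Qed.

Lemma ip0l w : ip 0 w = 0.
Proof.
case: hip => ipl _ _ _; have /eqP := ipl 1 0 0 w.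
by rewrite scaler0 addr0 mul1r -subr_eq0 opprD addrA subrr sub0r oppr_eq0 => /eqP.
Qed.

Lemma ip0r w : ip w 0 = 0.
Proof. by rewrite ipJ ip0l conjc0. Qed.

Lemma ipDl u v w : ip (u + v) w = ip u w + ip v w.
Proof. by case: hip => ipl _ _ _; rewrite -[u in LHS]scale1r ipl mul1r. Qed.

Lemma ipZl a u w : ip (a *: u) w = a * ip u w.
Proof. by case: hip => ipl _ _ _; rewrite -[_ *: _]addr0 ipl ip0l addr0. Qed.

Lemma ipBl u v w : ip (u - v) w = ip u w - ip v w.
Proof. by rewrite ipDl -scaleN1r ipZl mulN1r. Qed.

Lemma ip_suml N (a : nat -> R[i]) (z : nat -> V) w :
  ip (\sum_(i < N) a i *: z i) w = \sum_(i < N) a i * ip (z i) w.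
Proof.
elim: N => [|N IH]; first by rewrite !big_ord0 ip0l.
by rewrite !big_ord_recr /= ipDl ipZl IH.
Qed.

Lemma ipxx_Re_ge0 u : 0 <= complex.Re (ip u u).
Proof. by case: hip. Qed.

Lemma ipxx_Re_eq0 u : complex.Re (ip u u) = 0 -> u = 0.
Proof.
case: hip => _ _ _ ip_def Re0; apply: ip_def; apply/eqP.
by rewrite eq_complex Re0 (Im_eq0_conj _ (ipJ u u)) !eqxx.
Qed.

Lemma hnorm_sqr u : hnorm ip u ^+ 2 = complex.Re (ip u u).
Proof. by rewrite sqr_sqrtr // ipxx_Re_ge0. Qed.

End inner_product_theory.

Section partial_square_sums.
Context {R : realType}.
Local Notation C := R[i].
Implicit Types (s p q : nat -> C) (t : R).

Definition sqsum (N : nat) s : R := \sum_(0 <= n < N) cabs2 (s n).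

Lemma sqsumE N s : sqsum N s = \sum_(n < N) cabs2 (s n).
Proof. exact: big_mkord. Qed.

Lemma sqsum_ge0 N s : 0 <= sqsum N s.
Proof. by apply: sumr_ge0 => n _; apply: cabs2_ge0. Qed.

Lemma eq_sqsum N p q : p =1 q -> sqsum N p = sqsum N q.
Proof. by move=> pq; apply: eq_bigr => n _; rewrite pq. Qed.

Lemma sqsumN N s : sqsum N (fun n => - s n) = sqsum N s.
Proof. by apply: eq_bigr => n _; rewrite cabs2N. Qed.

Lemma sqsum_cst0 N : sqsum N (fun=> 0) = 0.
Proof. by rewrite /sqsum big1 // => n _; rewrite cabs20. Qed.

Lemma sqsum_split N M s : (N <= M)%N ->
  sqsum M s = sqsum N s + \sum_(N <= n < M) cabs2 (s n).
Proof. by move=> NM; rewrite /sqsum (big_cat_nat (leq0n N) NM). Qed.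

Lemma le_sqsum N M s : (N <= M)%N -> sqsum N s <= sqsum M s.
Proof.
move=> NM; rewrite (sqsum_split _ _ s NM) lerDl.
by apply: sumr_ge0 => n _; apply: cabs2_ge0.
Qed.

Lemma cabs2_le_sqsum n M s : (n < M)%N -> cabs2 (s n) <= sqsum M s.
Proof.
move=> nM; apply: le_trans (le_sqsum _ _ s nM).
by rewrite /sqsum big_nat_recr //= lerDr sqsum_ge0.
Qed.

Lemma sqsum_le_mul N s D : (forall n, cabs2 (s n) <= D) -> sqsum N s <= N%:R * D.
Proof.
move=> sD; rewrite sqsumE (@le_trans _ _ (\sum_(n < N) D)) //.
  by apply: ler_sum.
by rewrite sumr_const card_ord mulr_natl.
Qed.

Lemma sqsum_addr_le N p q t : 0 < t ->
  sqsum N (fun n => p n + q n) <= (1 + t) * sqsum N p + (1 + t^-1) * sqsum N q.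
Proof.
move=> t0; rewrite /sqsum !mulr_sumr -big_split /=.
by apply: ler_sum => n _; apply: cabs2_addr_le.
Qed.

Lemma sqsum_midpoint N p q m : (forall n, m n + m n = p n + q n) ->
  sqsum N (fun n => p n - q n) = 2 * sqsum N p + 2 * sqsum N q - 4 * sqsum N m.
Proof.
move=> pqm; rewrite /sqsum !mulr_sumr -big_split -sumrB /=.
by apply: eq_bigr => n _; rewrite (cabs2_midpoint _ _ _ (pqm n)).
Qed.

Lemma sqsum_subZ N p q t :
  sqsum N (fun n => p n - t%:C%C * q n) =
  sqsum N p - 2 * t * \sum_(0 <= n < N) complex.Re (p n * (q n)^*%C)
  + t ^+ 2 * sqsum N q.
Proof.
rewrite /sqsum mulr_sumr mulr_sumr -sumrB -big_split /=.
by apply: eq_bigr => n _; rewrite cabs2_subZ.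
Qed.

End partial_square_sums.

Section sqsum_series.
Context {R : realType}.
Implicit Types (s : nat -> R[i]) (M X e : R).

Lemma sqsum_le_of_nneseries s M :
  (\sum_(0 <= n <oo) (cabs2 (s n))%:E <= M%:E)%E -> forall N, sqsum N s <= M.
Proof.
move=> sM N; rewrite -lee_fin sqsumE.
exact: le_trans (partial_le_nneseries _ N (fun n => cabs2_ge0 _)) sM.
Qed.

Lemma sqsum_gt_of_nneseries s X e : 0 < e ->
  (X%:E <= \sum_(0 <= n <oo) (cabs2 (s n))%:E)%E -> exists N, X - e < sqsum N s.
Proof.
move=> e0 Xs.
have [N XN] := lt_partial_nneseries _ _ _ (fun n => cabs2_ge0 (s n)) e0 Xs.
by exists N; rewrite sqsumE.
Qed.

Lemma in_l2_of_sqsum_le s M : (forall N, sqsum N s <= M) -> in_l2 s.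
Proof.
move=> sM; apply: le_lt_trans (ltry M).
by apply: nneseries_le => [n|N]; rewrite ?cabs2_ge0 // -sqsumE.
Qed.

End sqsum_series.

Section archimedean_bounds.
Context {R : realType}.

Lemma exists_div_natS_lt (D e : R) : 0 <= D -> 0 < e ->
  exists k : nat, D / k.+1%:R < e.
Proof.
move=> D0 e0; exists (Num.bound (D / e)).
rewrite ltr_pdivrMr ?ltr0n // -ltr_pdivrMl // mulrC.
have De : 0 <= D / e by exact: divr_ge0 D0 (ltW e0).
by apply: lt_le_trans (archi_boundP De) _; rewrite ler_nat.
Qed.

Lemma le_of_le_add_div_natS (X Y D : R) : 0 <= D ->
  (forall k : nat, X <= Y + D / k.+1%:R) -> X <= Y.
Proof.
move=> D0 XY; apply/ler_addgt0Pr => e e0.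
have [k Dk] := exists_div_natS_lt _ _ D0 e0.
by apply: le_trans (XY k) _; rewrite lerD2l ltW.
Qed.

Lemma sup_lower_rate (r e : nat -> R) :
  (forall j k, (k <= j)%N -> `|r j - r k| <= e k) ->
  forall k, `|sup (range (fun k => r k - e k)) - r k| <= e k.
Proof.
move=> re; have e_ge0 j : 0 <= e j := le_trans (normr_ge0 _) (re j j (leqnn j)).
have re' j k : r k - e k <= r j + e j.
  have [kj|jk] := leqP k j.
    by have := re j k kj; rewrite ler_norml => /andP[? _]; have := e_ge0 j; lra.
  by have := re k j (ltnW jk); rewrite ler_norml => /andP[_ ?]; have := e_ge0 k; lra.
have hs : has_sup (range (fun k => r k - e k)).
  by split; [exists (r 0%N - e 0%N), 0%N | exists (r 0%N + e 0%N) => _ [k _ <-]].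
move=> k; rewrite ler_norml; apply/andP; split.
  suff : r k - e k <= sup (range (fun k => r k - e k)) by lra.
  by apply: sup_upper_bound => //; exists k.
suff : sup (range (fun k => r k - e k)) <= r k + e k by lra.
by apply: ge_sup; [case: hs | move=> _ [j _ <-]].
Qed.

End archimedean_bounds.

Section minimal_in_coset.
Context {R : realType} {V : lmodType R[i]}.
Local Notation C := R[i].
Local Notation Re := complex.Re.
Local Notation Im := complex.Im.

Definition minimal_in_coset (l : V -> nat -> C) (a : nat -> C) (d : R) :=
  (forall M, sqsum M a <= d) /\
  forall u t e, 0 < e -> exists M, d - e < sqsum M (fun n => a n + t * l u n).

Variables (l : V -> nat -> C) (b : nat -> C) (delta : R).
Hypothesis lD : forall u v n, l (u + v) n = l u n + l v n.
Hypothesis lZ : forall t u n, l (t *: u) n = t * l u n.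
Hypothesis coset_bounded :
  forall u, exists M, forall N, sqsum N (fun n => l u n + b n) <= M.
Hypothesis coset_ge :
  forall u e, 0 < e -> exists N, delta - e < sqsum N (fun n => l u n + b n).

Let c u n := l u n + b n.
Let F u := sup (range (fun N => sqsum N (c u))).

Let has_sup_F u : has_sup (range (fun N => sqsum N (c u))).
Proof.
split; first by exists (sqsum 0 (c u)), 0%N.
by have [M cM] := coset_bounded u; exists M => _ [N _ <-].
Qed.

Let sqsum_le_F u N : sqsum N (c u) <= F u.
Proof. by apply: sup_upper_bound (has_sup_F u) _ _; exists N. Qed.

Let F_lt_sqsum u e : 0 < e -> exists N, F u - e < sqsum N (c u).
Proof. by move=> e0; have [_ [N _ <-]] := sup_adherent e0 (has_sup_F u); exists N. Qed.

Let F_ge0 u : 0 <= F u.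
Proof. exact: le_trans (sqsum_ge0 0 (c u)) (sqsum_le_F u 0). Qed.

Let delta_le_F u : delta <= F u.
Proof.
apply/ler_addgt0Pr => e e0; have [N cN] := coset_ge u _ e0.
by have := sqsum_le_F u N; lra.
Qed.

Let d := inf (range F).

Let has_inf_F : has_inf (range F).
Proof. by split; [exists (F 0), 0 | exists 0 => _ [u _ <-]]. Qed.

Let d_le_F u : d <= F u.
Proof. by apply: ge_inf; [case: has_inf_F | exists u]. Qed.

Let delta_le_d : delta <= d.
Proof. by apply: lb_le_inf; [exists (F 0), 0 | move=> _ [u _ <-]]. Qed.

Let d_ge0 : 0 <= d.
Proof. by apply: lb_le_inf; [exists (F 0), 0 | move=> _ [u _ <-]]. Qed.

Let h (k : nat) : R := k.+1%:R^-1.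

Let h_gt0 k : 0 < h k.
Proof. by rewrite invr_gt0 ltr0n. Qed.

Let h_le1 k : h k <= 1.
Proof. by rewrite invf_le1 ?ltr0n // ler1n. Qed.

Let h_le j k : (k <= j)%N -> h j <= h k.
Proof. by move=> kj; rewrite lef_pV2 ?posrE ?ltr0n // ler_nat ltnS. Qed.

Let exists_near_inf k : exists u, F u < d + h k ^+ 2.
Proof.
have [_ [u _ <-] Fu] := inf_adherent (exprn_gt0 2 (h_gt0 k)) has_inf_F.
by exists u.
Qed.

Let u_ k := projT1 (cid (exists_near_inf k)).
Let F_u_lt k : F (u_ k) < d + h k ^+ 2 := projT2 (cid (exists_near_inf k)).
Let c_ k := c (u_ k).

Let sqsum_sub_c N j k :
  sqsum N (fun n => c_ j n - c_ k n) <= 2 * h j ^+ 2 + 2 * h k ^+ 2.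
Proof.
apply/ler_addgt0Pr => e e0.
pose m := (2^-1 : C) *: (u_ j + u_ k).
have cm n : c m n + c m n = c_ j n + c_ k n.
  by rewrite /c_ /c /m lZ lD; field.
have [M cmM] := F_lt_sqsum m _ (divr_gt0 e0 (ltr0n _ 4)).
have := le_sqsum _ _ (fun n => c_ j n - c_ k n) (leq_maxr M N).
rewrite (sqsum_midpoint (maxn M N) _ _ _ cm).
have := le_sqsum _ _ (c m) (leq_maxl M N).
have := sqsum_le_F (u_ j) (maxn M N); have := sqsum_le_F (u_ k) (maxn M N).
have := F_u_lt j; have := F_u_lt k; have := d_le_F m.
rewrite /c_; lra.
Qed.

Let coord_close n j k : (k <= j)%N ->
  `|Re (c_ j n) - Re (c_ k n)| <= 2 * h k /\ `|Im (c_ j n) - Im (c_ k n)| <= 2 * h k.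
Proof.
move=> kj; have := le_trans (cabs2_le_sqsum n n.+1 _ (ltnSn n)) (sqsum_sub_c n.+1 j k).
have := Re_sqr_le_cabs2 (c_ j n - c_ k n); have := Im_sqr_le_cabs2 (c_ j n - c_ k n).
rewrite ReB ImB => Im_le Re_le cjk.
have hjk := h_le _ _ kj; have hj := h_gt0 j.
by split; rewrite ler_norml; apply/andP; split; nra.
Qed.

(* the coordinatewise limit of [c_ k], which converges at rate [2 * h k] *)
Let a n : C := Complex (sup (range (fun k => Re (c_ k n) - 2 * h k)))
                       (sup (range (fun k => Im (c_ k n) - 2 * h k))).

Let cabs2_sub_a n k : cabs2 (a n - c_ k n) <= 8 * h k ^+ 2.
Proof.
have Re_close := sup_lower_rate (fun k => Re (c_ k n)) (fun k => 2 * h k)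
  (fun j k kj => (coord_close n j k kj).1) k.
have Im_close := sup_lower_rate (fun k => Im (c_ k n)) (fun k => 2 * h k)
  (fun j k kj => (coord_close n j k kj).2) k.
move: Re_close Im_close; rewrite /cabs2 ReB ImB !ler_norml /=.
by move=> /andP[? ?] /andP[? ?]; have := h_gt0 k; nra.
Qed.

Let sqsum_sub_a N k : sqsum N (fun n => a n - c_ k n) <= 4 * h k ^+ 2.
Proof.
have D0 : 0 <= 16 * N%:R + 4 :> R by rewrite addr_ge0 // mulr_ge0 // ler0n.
apply: (le_of_le_add_div_natS _ _ _ D0) => j.
have := sqsum_addr_le N (fun n => a n - c_ j n) (fun n => c_ j n - c_ k n) _ ltr01.
have -> : sqsum N (fun n => a n - c_ j n + (c_ j n - c_ k n)) =
          sqsum N (fun n => a n - c_ k n).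
  by apply: eq_sqsum => n; rewrite addrA subrK.
have := sqsum_le_mul N _ _ (fun n => cabs2_sub_a n j).
have := sqsum_sub_c N j k.
have -> : (16 * N%:R + 4) / j.+1%:R = (16 * N%:R + 4) * h j by [].
have hj2 : h j ^+ 2 <= h j by rewrite expr2 ger_pMl ?h_gt0 ?h_le1.
have := ler_wpM2l (ler0n R N) hj2; have := h_gt0 j.
rewrite invr1; lra.
Qed.

Let scaled_sqsum_sub_a M k :
  (1 + (h k)^-1) * sqsum M (fun n => a n - c_ k n) <= 4 * h k ^+ 2 + 4 * h k.
Proof.
have -> : 4 * h k ^+ 2 + 4 * h k = (1 + (h k)^-1) * (4 * h k ^+ 2).
  by field; rewrite gt_eqF.
by apply: ler_wpM2l; [rewrite addr_ge0 // invr_ge0 ltW | exact: sqsum_sub_a].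
Qed.

Let sqsum_a_le M : sqsum M a <= d.
Proof.
have D0 : 0 <= d + 10 by rewrite addr_ge0.
apply: (le_of_le_add_div_natS _ _ _ D0) => k.
have -> : sqsum M a = sqsum M (fun n => c_ k n + (a n - c_ k n)).
  by apply: eq_sqsum => n; rewrite addrC subrK.
have := sqsum_addr_le M (c_ k) (fun n => a n - c_ k n) _ (h_gt0 k).
have := le_lt_trans (sqsum_le_F (u_ k) M) (F_u_lt k).
have := scaled_sqsum_sub_a M k.
have -> : (d + 10) / k.+1%:R = (d + 10) * h k by [].
move: (h_gt0 k) (h_le1 k); set t := h k => t_gt0 t_le1 Y X.
have tX := ler_wpM2l (addr_ge0 ler01 (ltW t_gt0)) (ltW X).
have t2 : t ^+ 2 <= t by rewrite expr2 ger_pMl.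
have t3 : t ^+ 3 <= t by rewrite exprSr ger_pMl // (le_trans t2 t_le1).
nra.
Qed.

Let sqsum_coset_gt u t e : 0 < e ->
  exists M, d - e < sqsum M (fun n => a n + t * l u n).
Proof.
move=> e0; have e2 : 0 < e / 2 by rewrite divr_gt0.
have [k dk] := exists_div_natS_lt _ _ (addr_ge0 d_ge0 (ler0n R 8)) e2.
pose m := u_ k + t *: u.
have [M mM] := F_lt_sqsum m _ e2.
exists M; rewrite ltNge; apply/negP => X.
have := sqsum_addr_le M (fun n => a n + t * l u n) (fun n => c_ k n - a n) _ (h_gt0 k).
have -> : sqsum M (fun n => a n + t * l u n + (c_ k n - a n)) = sqsum M (c m).
  by apply: eq_sqsum => n; rewrite /c_ /c /m lD lZ; ring.
have -> : sqsum M (fun n => c_ k n - a n) = sqsum M (fun n => a n - c_ k n).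
  by rewrite -sqsumN; apply: eq_sqsum => n; rewrite opprB.
have := scaled_sqsum_sub_a M k; have := d_le_F m.
move: (h_gt0 k) (h_le1 k) dk; rewrite -/(h k); set s := h k => s_gt0 s_le1 dk.
have sX := ler_wpM2l (addr_ge0 ler01 (ltW s_gt0)) X.
have s2 : s ^+ 2 <= s by rewrite expr2 ger_pMl.
have := mulr_ge0 (ltW s_gt0) (ltW e0).
nra.
Qed.

Lemma exists_minimal_in_coset :
  exists a' d', delta <= d' /\ minimal_in_coset l a' d'.
Proof.
exists a, d; do 2?split; first exact: delta_le_d.
  exact: sqsum_a_le.
exact: sqsum_coset_gt.
Qed.

End minimal_in_coset.

Section bessel_sequences.
Context {R : realType} {V : lmodType R[i]}.
Local Notation Re := complex.Re.
Variable ip : V -> V -> R[i].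
Hypothesis hip : inner_product ip.

Definition bessel (x : nat -> V) (B : R) :=
  forall u N, sqsum N (fun n => ip u (x n)) <= B * Re (ip u u).

Lemma synthesis_cst0 (x : nat -> V) : synthesis ip x (fun=> 0) 0.
Proof.
move=> e e0; exists 0%N => n _.
rewrite big1 => [|i _]; last by rewrite scale0r.
by rewrite subrr /hnorm (ip0l hip) sqrtr0.
Qed.

Context {x : nat -> V} {B : R} {a : nat -> R[i]} {d : R}.
Hypotheses (B_gt0 : 0 < B) (x_bessel : bessel x B).
Hypothesis a_min : minimal_in_coset (fun u n => ip u (x n)) a d.

Let S N := \sum_(i < N) a i *: x i.

Let Re_ip_S N : Re (ip (S N) (S N)) =
  \sum_(0 <= n < N) Re (a n * (ip (S N) (x n))^*%C).
Proof.
rewrite {1}/S (ip_suml hip) Re_sum big_mkord.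
by apply: eq_bigr => i _; rewrite -(ipJ hip).
Qed.

Let tail_le N M v : (N <= M)%N ->
  - \sum_(N <= n < M) Re (a n * (ip v (x n))^*%C) <=
  (B * (d - sqsum N a) + Re (ip v v)) / 2.
Proof.
move=> NM; rewrite -sumrN.
apply: (@le_trans _ _ (\sum_(N <= n < M)
    (B * cabs2 (a n) + B^-1 * cabs2 (ip v (x n))) / 2)).
  apply: ler_sum => n _; have := Re_mulJ_le (- a n) (ip v (x n)) _ B_gt0.
  by rewrite cabs2N mulNr ReN; lra.
rewrite -mulr_suml big_split /= -!mulr_sumr ler_pM2r ?invr_gt0 //.
have tail_a : \sum_(N <= n < M) cabs2 (a n) <= d - sqsum N a.
  by have := sqsum_split _ _ a NM; have := a_min.1 M; lra.
have tail_x : \sum_(N <= n < M) cabs2 (ip v (x n)) <= B * Re (ip v v).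
  have := sqsum_split _ _ (fun n => ip v (x n)) NM.
  by have := sqsum_ge0 N (fun n => ip v (x n)); have := x_bessel v M; lra.
apply: lerD; first by rewrite ler_pM2l.
by rewrite -[leRHS]mul1r -(mulVf (lt0r_neq0 B_gt0)) -mulrA ler_pM2l ?invr_gt0.
Qed.

(* Compare a with a - s T^*(S N), where T^*(S N) = (<S N, x_n>)_n: the first N terms
   of their inner product add up to <S N, S N>, the rest is bounded by the tail of a. *)
Let partial_synthesis_le N s : 0 < s ->
  Re (ip (S N) (S N)) <= B * (d - sqsum N a) + s * B * Re (ip (S N) (S N)).
Proof.
move=> s_gt0; set rho := Re (ip (S N) (S N)); set phi := fun n => ip (S N) (x n).
suff : s * rho <= s * (B * (d - sqsum N a) + s * B * rho) by rewrite ler_pM2l.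
apply/ler_addgt0Pr => e e0.
have [M aM] := a_min.2 (S N) (- s%:C%C) e e0.
have NM := leq_maxr M N.
have := le_sqsum _ _ (fun n => a n + - s%:C%C * phi n) (leq_maxl M N).
have -> : sqsum (maxn M N) (fun n => a n + - s%:C%C * phi n) =
          sqsum (maxn M N) (fun n => a n - s%:C%C * phi n).
  by apply: eq_sqsum => n; rewrite mulNr.
rewrite sqsum_subZ (big_cat_nat (leq0n N) NM) /= -Re_ip_S -/rho.
have := tail_le _ _ (S N) NM; rewrite -/phi -/rho.
have := a_min.1 (maxn M N).
have := x_bessel (S N) (maxn M N); rewrite -/phi -/rho.
move=> phiB aM' tail Ma.
have := ler_wpM2l (ltW (exprn_gt0 2 s_gt0)) phiB.
have := ler_wpM2l (ltW s_gt0) tail.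
nra.
Qed.

Lemma partial_synthesis_bound N :
  Re (ip (S N) (S N)) <= B * (d - sqsum N a).
Proof.
apply: (le_of_le_add_div_natS _ _ _ (ipxx_Re_ge0 hip (S N))) => k.
have s_gt0 : 0 < (B * k.+1%:R)^-1 by rewrite invr_gt0 mulr_gt0 ?ltr0n.
apply: le_trans (partial_synthesis_le N _ s_gt0) _.
by rewrite lerD2l invfM [_ / _ * B]mulrAC mulVf ?lt0r_neq0 // mul1r mulrC.
Qed.

Lemma synthesis_minimal_in_coset : synthesis ip x a 0.
Proof.
move=> e e0; have eB : 0 < e ^+ 2 / B by rewrite divr_gt0 ?exprn_gt0.
have [M] := a_min.2 0 0 _ eB.
rewrite (@eq_sqsum _ M _ a) => [aM|n]; last by rewrite mul0r addr0.
exists M => N MN; rewrite subr0.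
have SN := partial_synthesis_bound N; rewrite -(hnorm_sqr hip) in SN.
have : B * (d - sqsum N a) < e ^+ 2.
  rewrite -ltr_pdivlMl // mulrC; have := le_sqsum _ _ a MN; lra.
move=> /(le_lt_trans SN); rewrite ltr_pXn2r ?nnegrE ?(ltW e0) //.
exact: sqrtr_ge0.
Qed.

Lemma Kminimal_minimal_in_coset : Kminimal ip x -> d <= 0.
Proof.
move=> x_min; have a0 : a = fun=> 0.
  apply: x_min (synthesis_minimal_in_coset) (synthesis_cst0 x).
    exact: in_l2_of_sqsum_le a_min.1.
  by apply: (in_l2_of_sqsum_le _ 0) => N; rewrite sqsum_cst0.
apply/ler_addgt0Pr => e e0; have [M] := a_min.2 0 0 e e0.
rewrite a0 (@eq_sqsum _ M _ (fun=> 0)) => [|n]; last by rewrite mul0r addr0.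
by rewrite sqsum_cst0; lra.
Qed.

End bessel_sequences.

Lemma bounded_op0 {R : realType} {V : lmodType R[i]} (ip : V -> V -> R[i]) K :
  bounded_op ip K -> K 0 = 0.
Proof.
case=> linK _; have /eqP := linK 1 0 0.
by rewrite scaler0 addr0 scale1r -subr_eq0 opprD addrA subrr sub0r oppr_eq0 => /eqP.
Qed.

Section direct_sum.
Context {R : realType} {V1 V2 : lmodType R[i]}.
Local Notation Re := complex.Re.
Context {ip1 : V1 -> V1 -> R[i]} {ip2 : V2 -> V2 -> R[i]}.
Context {K : V1 -> V1} {L : V2 -> V2} {x : nat -> V1} {y : nat -> V2}.

Lemma Kframe_sum_swap :
  Kframe (ip_sum ip1 ip2) (op_sum K L) (fun n => (x n, y n)) ->
  Kframe (ip_sum ip2 ip1) (op_sum L K) (fun n => (y n, x n)).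
Proof.
move=> [Ks [Ks_adj [A [B [A_gt0 [B_gt0 frame]]]]]].
pose swap (p : V2 * V1) : V1 * V2 := (p.2, p.1).
exists (fun p => ((Ks (swap p)).2, (Ks (swap p)).1)); split.
  move=> u v; have := Ks_adj (swap u) (swap v).
  by rewrite /ip_sum /= => adj_uv; rewrite addrC adj_uv addrC.
exists A, B; do 2!split => //; move=> v.
have hnorm_swap q : hnorm (ip_sum ip2 ip1) q = hnorm (ip_sum ip1 ip2) (swap q).
  by rewrite /hnorm /ip_sum addrC.
rewrite !hnorm_swap (eq_eseriesr (g := fun n =>
  (cabs2 (ip_sum ip1 ip2 (swap v) (x n, y n)))%:E)); first exact: frame.
by move=> n _; rewrite /ip_sum addrC.
Qed.

Hypotheses (hip1 : inner_product ip1) (hip2 : inner_product ip2).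

Lemma hnorm_ip_sum p :
  hnorm (ip_sum ip1 ip2) p ^+ 2 = Re (ip1 p.1 p.1) + Re (ip2 p.2 p.2).
Proof. by rewrite sqr_sqrtr /ip_sum ReD // addr_ge0 ?ipxx_Re_ge0. Qed.

Hypothesis K0 : K 0 = 0.

Lemma adjoint_op_sum_snd Ks : adjoint (ip_sum ip1 ip2) (op_sum K L) Ks ->
  forall q p, ip2 q (Ks p).2 = ip2 (L q) p.2.
Proof.
move=> Ks_adj q p; have := Ks_adj (0, q) p.
by rewrite /ip_sum /= K0 !(ip0l hip1) !add0r.
Qed.

Lemma adjoint_op_sum_sndE Ks : adjoint (ip_sum ip1 ip2) (op_sum K L) Ks ->
  forall u w, (Ks (u, w)).2 = (Ks (0, w)).2.
Proof.
move=> /adjoint_op_sum_snd Ks_snd u w; apply/eqP; rewrite -subr_eq0; apply/eqP.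
apply: (ipxx_Re_eq0 hip2); set v := _ - _.
by rewrite [X in Re X](ipBl hip2) !(ipJ hip2 v) !Ks_snd subrr.
Qed.

Lemma adjoint_op_sum_snd_gt0 Ks q :
  adjoint (ip_sum ip1 ip2) (op_sum K L) Ks -> L q != 0 ->
  0 < Re (ip2 (Ks (0, L q)).2 (Ks (0, L q)).2).
Proof.
move=> Ks_adj Lq_neq0; rewrite lt_def ipxx_Re_ge0 // andbT.
apply: contra Lq_neq0 => /eqP/(ipxx_Re_eq0 hip2) z0; apply/eqP/(ipxx_Re_eq0 hip2).
by rewrite -(adjoint_op_sum_snd _ Ks_adj q (0, L q)) z0 (ip0r hip2).
Qed.

Lemma Kframe_sum_Kminimal_fst :
  Kframe (ip_sum ip1 ip2) (op_sum K L) (fun n => (x n, y n)) ->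
  Kminimal ip1 x -> L = (fun=> 0).
Proof.
move=> [Ks [Ks_adj [A [B [A_gt0 [B_gt0 frame]]]]]] x_min.
apply: boolp.funext => q; apply/eqP; apply: contraT => Lq_neq0.
pose w := L q; pose z := (Ks (0, w)).2.
have z_gt0 : 0 < Re (ip2 z z) := adjoint_op_sum_snd_gt0 _ _ Ks_adj Lq_neq0.
have x_bessel : bessel ip1 x B.
  move=> u N; rewrite (@eq_sqsum _ N _ (fun n => ip_sum ip1 ip2 (u, 0) (x n, y n))).
    have := sqsum_le_of_nneseries _ _ (frame (u, 0)).2 N.
    by rewrite hnorm_ip_sum /= (ip0l hip2) addr0.
  by move=> n; rewrite /ip_sum /= (ip0l hip2) addr0.
have c_bounded u :
    exists M, forall N, sqsum N (fun n => ip1 u (x n) + ip2 w (y n)) <= M.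
  exists (B * hnorm (ip_sum ip1 ip2) (u, w) ^+ 2).
  exact: sqsum_le_of_nneseries _ _ (frame (u, w)).2.
have c_ge u e : 0 < e ->
    exists N, A * Re (ip2 z z) - e < sqsum N (fun n => ip1 u (x n) + ip2 w (y n)).
  move=> e0; apply: sqsum_gt_of_nneseries _ _ _ e0 (le_trans _ (frame (u, w)).1).
  rewrite lee_fin ler_pM2l // hnorm_ip_sum (adjoint_op_sum_sndE _ Ks_adj) lerDr.
  exact: ipxx_Re_ge0.
have [a [d [zd a_min]]] := exists_minimal_in_coset _ _ _
  (fun u v n => ipDl hip1 u v (x n)) (fun t u n => ipZl hip1 t u (x n)) c_bounded c_ge.
have := Kminimal_minimal_in_coset ip1 hip1 B_gt0 x_bessel a_min x_min.
by have := mulr_gt0 A_gt0 z_gt0; lra.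
Qed.

End direct_sum.

Theorem corollary2p13 (R : realType) (V1 V2 : lmodType R[i])
  (ip1 : V1 -> V1 -> R[i]) (ip2 : V2 -> V2 -> R[i])
  (K : V1 -> V1) (L : V2 -> V2) (x : nat -> V1) (y : nat -> V2) :
  hilbert_space ip1 -> separable ip1 ->
  hilbert_space ip2 -> separable ip2 ->
  bounded_op ip1 K -> bounded_op ip2 L ->
  (Kframe (ip_sum ip1 ip2) (op_sum K L) (fun n => (x n, y n)) ->
     [/\ (Kminimal ip1 x -> L = (fun _ => 0)),
         (Kminimal ip2 y -> K = (fun _ => 0)) &
         (Kminimal ip1 x -> Kminimal ip2 y ->
            K = (fun _ => 0) /\ L = (fun _ => 0))]) /\
  (K <> (fun _ => 0) -> L <> (fun _ => 0) ->
     ((Kframe ip1 K x /\ Kminimal ip1 x) \/ (Kframe ip2 L y /\ Kminimal ip2 y)) ->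
     ~ Kframe (ip_sum ip1 ip2) (op_sum K L) (fun n => (x n, y n))).
Proof.
move=> [hip1 _] _ [hip2 _] _ /bounded_op0 K0 /bounded_op0 L0.
split=> [frame | K_neq0 L_neq0 [[_ x_min] | [_ y_min]] frame].
- have L_eq0 := Kframe_sum_Kminimal_fst hip1 hip2 K0 frame.
  have K_eq0 := Kframe_sum_Kminimal_fst hip2 hip1 L0 (Kframe_sum_swap frame).
  split=> [|| x_min y_min]; [exact: L_eq0 | exact: K_eq0 |].
  by split; [exact: K_eq0 | exact: L_eq0].
- exact: L_neq0 (Kframe_sum_Kminimal_fst hip1 hip2 K0 frame x_min).
- exact: K_neq0 (Kframe_sum_Kminimal_fst hip2 hip1 L0 (Kframe_sum_swap frame) y_min).
Qed.
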